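(* Let $\Gamma$ be a connected finite simple graph and let $\mathcal{R}$ be an equivalence relation on $V(\Gamma)$ with distinct equivalence classes $C_1,\dots,C_k$, where $|C_i|=n_i$ for $1\le i\le k$. Let $\Gamma^{\mathcal{R}}$ be the $\mathcal{R}$-super $\Gamma$ graph. Then all vertices of $C_i$ have the same degree in $\Gamma^{\mathcal{R}}$; call it $d_i$. Call $C_i$ and $C_j$ ($i\neq j$) adjacent if there exist $x\in C_i$, $y\in C_j$ adjacent in $\Gamma$. Let $N$ be the $k\times k$ matrix with $N_{ii}=(n_i-1)d_i\sqrt{2}$ and, for $i\ne j$, $N_{ij}=n_j\sqrt{d_i^2+d_j^2}$ if $C_i$ and $C_j$ are adjacent and $N_{ij}=0$ otherwise. Then the characteristic polynomial of the Sombor matrix of $\Gamma^{\mathcal{R}}$ is \[\chi(S(\Gamma^{\mathcal{R}}),x)=\chi(N,x)\prod_{i=1}^{k}\left(x+d_i\sqrt{2}\right)^{n_i-1},\] where $\chi(M,x)=\det(xI-M)$.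
   Context: All graphs are finite, simple and undirected. For a graph $\Gamma$ with vertices $u_1,\dots,u_m$, the Sombor matrix $S(\Gamma)$ is the $m\times m$ matrix whose $(i,j)$ entry is $\sqrt{\deg(u_i)^2+\deg(u_j)^2}$ if $u_i$ and $u_j$ are adjacent and $0$ otherwise (so the diagonal is zero). Given a graph $\Gamma$ and an equivalence relation $\mathcal{R}$ on $V(\Gamma)$, the $\mathcal{R}$-super $\Gamma$ graph $\Gamma^{\mathcal{R}}$ has vertex set $V(\Gamma)$, and two distinct vertices $x,y$ are adjacent iff either $x,y$ lie in the same $\mathcal{R}$-class or there exist $x'\in[x]_{\mathcal{R}}$ and $y'\in[y]_{\mathcal{R}}$ with $x'$ adjacent to $y'$ in $\Gamma$. *)

From HB Require Import structures.
From mathcomp Require Import all_boot all_order all_algebra.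
Set Implicit Arguments. Unset Strict Implicit. Unset Printing Implicit Defensive.
Import Order.TTheory GRing.Theory Num.Theory.
Local Open Scope ring_scope.

Definition simple_graph (m : nat) (e : rel 'I_m) : Prop :=
  symmetric e /\ irreflexive e.

Definition connected_graph (m : nat) (e : rel 'I_m) : Prop :=
  forall x y : 'I_m, connect e x y.

Definition super_adj (m : nat) (e : rel 'I_m) (Rl : rel 'I_m) : rel 'I_m :=
  fun x y => (x != y) &&
    (Rl x y || [exists x' : 'I_m, exists y' : 'I_m,
                  [&& Rl x x', Rl y y' & e x' y']]).

Definition deg (m : nat) (e : rel 'I_m) (x : 'I_m) : nat := #|[set y | e x y]|.

Definition sombor_matrix (F : rcfType) (m : nat) (e : rel 'I_m) : 'M[F]_m :=
  \matrix_(i, j) (if e i j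
                  then Num.sqrt ((deg e i)%:R ^+ 2 + (deg e j)%:R ^+ 2)
                  else 0).

(* The quotient matrix N of the theorem, for classes labelled by c : 'I_m -> 'I_k,
   class sizes n_i = #|C_i|, and class degrees d. *)
Definition class_size (m k : nat) (c : 'I_m -> 'I_k) (i : 'I_k) : nat :=
  #|[set x | c x == i]|.

Definition class_adj (m k : nat) (e : rel 'I_m) (c : 'I_m -> 'I_k) (i j : 'I_k) : bool :=
  [exists x : 'I_m, exists y : 'I_m, [&& c x == i, c y == j & e x y]].

Definition N_matrix (F : rcfType) (m k : nat) (e : rel 'I_m) (c : 'I_m -> 'I_k)
    (d : 'I_k -> nat) : 'M[F]_k :=
  \matrix_(i, j)
    (if i == j then ((class_size c i).-1)%:R * (d i)%:R * Num.sqrt 2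
     else if class_adj e c i j
          then (class_size c j)%:R * Num.sqrt ((d i)%:R ^+ 2 + (d j)%:R ^+ 2)
          else 0).

From HB Require Import structures.
From mathcomp Require Import all_boot all_order all_algebra.
From mathcomp Require Import perm ring.
Import Order.TTheory GRing.Theory Num.Theory.
Local Open Scope ring_scope.

(* Vertices of one class of the super graph are twins: they are pairwise
   adjacent and have the same neighbours outside their class.  Hence every
   vertex of class i has the same degree d_i, and the Sombor matrix is the
   blow-up S x y = B (c x) (c y) - [x = y] a (c x) of a k x k matrix B, with
   a i = d_i sqrt 2.  Fix a representative r i of each class and let E map
   every other vertex x to r (c x); then E^2 = 0, so 1 - E inverts 1 + E.
   Conjugating S by 1 + E sums the columns of each class into the column of
   its representative and subtracts the representative's row from the other
   rows of the class.  Listing the representatives first, the result is block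
   upper triangular, with the quotient matrix N and the diagonal matrix of the
   - a (c x), x not a representative, as diagonal blocks. *)

Set Implicit Arguments.
Unset Strict Implicit.
Unset Printing Implicit Defensive.

Lemma det_mxsub_inj (R : comNzRingType) n m (h : 'I_n -> 'I_m) (A : 'M[R]_m) :
  n = m -> injective h -> \det (mxsub h h A) = \det A.
Proof.
move=> eq_nm; subst m => h_inj.
have -> : mxsub h h A = row_perm (perm h_inj) (col_perm (perm h_inj) A).
  by apply/matrixP => i j; rewrite !mxE !permE.
rewrite row_permE col_permE !det_mulmx !det_perm odd_permV.
by rewrite mulrCA -signr_addb addbb expr0 mulr1.
Qed.

Lemma char_poly_mxsub_inj (R : comNzRingType) n m (h : 'I_n -> 'I_m)
    (A : 'M[R]_m) :
  n = m -> injective h -> char_poly (mxsub h h A) = char_poly A.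
Proof.
move=> eq_nm h_inj.
rewrite /char_poly -(det_mxsub_inj (char_poly_mx A) eq_nm h_inj).
by congr (\det _); apply/matrixP => i j; rewrite !mxE (inj_eq h_inj).
Qed.

Lemma char_poly_conj (R : comNzRingType) n (Q P A : 'M[R]_n) :
  Q *m P = 1%:M -> char_poly (Q *m A *m P) = char_poly A.
Proof.
move=> QP; rewrite /char_poly /char_poly_mx.
have QXP : map_mx polyC Q *m 'X%:M *m map_mx polyC P = 'X%:M.
  by rewrite mul_mx_scalar -scalemxAl -map_mxM QP map_mx1 scalemx1.
have -> : 'X%:M - map_mx polyC (Q *m A *m P) =
    map_mx polyC Q *m ('X%:M - map_mx polyC A) *m map_mx polyC P.
  by rewrite mulmxBr mulmxBl QXP !map_mxM.
by rewrite !det_mulmx mulrAC -det_mulmx -map_mxM QP map_mx1 det1 mul1r.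
Qed.

Lemma char_poly_ublock (R : comNzRingType) n1 n2 (A : 'M[R]_n1)
    (X : 'M[R]_(n1, n2)) (D : 'M[R]_n2) :
  char_poly (block_mx A X 0 D) = char_poly A * char_poly D.
Proof.
rewrite /char_poly /char_poly_mx scalar_mx_block map_block_mx map_mx0.
by rewrite opp_block_mx add_block_mx oppr0 !addr0 det_ublock.
Qed.

Lemma char_poly_diag (R : comNzRingType) n (d : 'rV[R]_n) :
  char_poly (diag_mx d) = \prod_(i < n) ('X - (d 0 i)%:P).
Proof.
rewrite char_poly_trig ?diag_mx_is_trig //.
by under eq_bigr do rewrite mxE eqxx mulr1n.
Qed.

Definition blowup_mx (R : nzRingType) (m k : nat) (c : 'I_m -> 'I_k)
    (B : 'M[R]_k) (a : 'I_k -> R) : 'M[R]_m :=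
  \matrix_(y, z) (B (c y) (c z) - (y == z)%:R * a (c y)).

Definition class_quotient_mx (R : nzRingType) (m k : nat) (c : 'I_m -> 'I_k)
    (B : 'M[R]_k) (a : 'I_k -> R) : 'M[R]_k :=
  \matrix_(i, j) ((class_size c j)%:R * B i j - (i == j)%:R * a i).

Section Blowup.
Variables (m k : nat) (c : 'I_m -> 'I_k) (r : 'I_k -> 'I_m).
Hypothesis cK : cancel r c.

Definition nonrep : {set 'I_m} := [set x | x != r (c x)].

Lemma rep_nonrep i : r i \notin nonrep.
Proof. by rewrite inE cK eqxx. Qed.

Lemma nonrep_neq_rep x i : x \in nonrep -> x != r i.
Proof. by rewrite inE; apply: contra => /eqP ->; rewrite cK. Qed.

Lemma card_nonrep : (k + #|nonrep|)%N = m.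
Proof.
have reps : ~: nonrep = r @: [set: 'I_k].
  apply/setP => x; rewrite !inE negbK.
  apply/eqP/imsetP => [->|[i _ ->]]; first by exists (c x).
  by rewrite cK.
have {1}<- : #|~: nonrep| = k.
  by rewrite reps card_imset ?cardsT ?card_ord //; apply: can_inj cK.
by rewrite addnC cardsC card_ord.
Qed.

Definition rep_first (i : 'I_(k + #|nonrep|)) : 'I_m :=
  match split i with inl i => r i | inr j => enum_val j end.

Lemma rep_first_lshift i : rep_first (lshift _ i) = r i.
Proof. by rewrite /rep_first (unsplitK (inl _ i)). Qed.

Lemma rep_first_rshift j : rep_first (rshift _ j) = enum_val j.
Proof. by rewrite /rep_first (unsplitK (inr _ j)). Qed.

Lemma rep_first_inj : injective rep_first.
Proof.
move=> i j; rewrite -[i]splitK -[j]splitK.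
case: (split i) => i'; case: (split j) => j' /=;
  rewrite ?rep_first_lshift ?rep_first_rshift.
- by move/(can_inj cK) ->.
- by move=> ri; have := enum_valP j'; rewrite -ri (negPf (rep_nonrep i')).
- by move=> ri; have := enum_valP i'; rewrite ri (negPf (rep_nonrep j')).
- by move/enum_val_inj ->.
Qed.

Lemma prod_nonrep_class (S : comNzRingType) (f : 'I_k -> S) :
  \prod_(j < #|nonrep|) f (c (enum_val j)) =
  \prod_(i < k) f i ^+ (class_size c i).-1.
Proof.
rewrite -(big_enum_val (fun x => f (c x))) (partition_big c predT) //=.
apply: eq_bigr => i _.
rewrite (eq_bigr (fun=> f i)) => [|x /andP[_ /eqP ->]] //.
rewrite -big_set prodr_const; congr (_ ^+ _).
have -> : [set x in nonrep | c x == i] = [set x | c x == i] :\ r i.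
  apply/setP => x; rewrite !inE.
  by case: (eqVneq (c x) i) => [<-|]; rewrite ?andbT ?andbF.
rewrite /class_size [#|[set x | c x == i]|](cardsD1 (r i)).
by rewrite inE cK eqxx add1n.
Qed.

Variable R : comNzRingType.

Definition gather_mx : 'M[R]_m :=
  \matrix_(y, x) ((y \in nonrep) && (x == r (c y)))%:R.

Lemma gather_mx_sqr : gather_mx *m gather_mx = 0.
Proof.
apply/matrixP => y x; rewrite !mxE; apply: big1 => z _; rewrite !mxE.
have [->|] := eqVneq z (r (c y)); last by rewrite andbF mul0r.
by rewrite (negPf (rep_nonrep _)) mulr0.
Qed.

Lemma gather_mxK : (1%:M - gather_mx) *m (1%:M + gather_mx) = 1%:M.
Proof.
by rewrite mulmxBl !mulmxDr !mul1mx mulmx1 gather_mx_sqr addr0 addrK.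
Qed.

Lemma mul1Bgather_mxE (A : 'M[R]_m) y x :
  ((1%:M - gather_mx) *m A) y x = A y x - (y \in nonrep)%:R * A (r (c y)) x.
Proof.
rewrite mulmxBl mul1mx !mxE (bigD1 (r (c y))) //= big1 ?addr0.
  by rewrite !mxE eqxx andbT.
by move=> z z_neq; rewrite !mxE (negPf z_neq) andbF mul0r.
Qed.

Lemma mulmx1Dgather_mxE (A : 'M[R]_m) y x :
  (A *m (1%:M + gather_mx)) y x =
  if x \in nonrep then A y x else \sum_(z | c z == c x) A y z.
Proof.
rewrite mulmxDr mulmx1 mxE [(A *m _) y x]mxE.
case: ifP => x_nonrep.
  rewrite big1 ?addr0 // => z _.
  by rewrite mxE (negPf (nonrep_neq_rep _ x_nonrep)) andbF mulr0.
have x_rep : x = r (c x) by apply/eqP; move: x_nonrep; rewrite inE => /negbFE.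
rewrite [RHS](bigD1 x) //= big_mkcond [in RHS]big_mkcond; congr (_ + _).
apply: eq_bigr => z _; rewrite mxE.
have -> : (z \in nonrep) && (x == r (c z)) = (c z == c x) && (z != x).
  rewrite inE; have [czx|czx] /= := eqVneq (c z) (c x).
    by rewrite czx -x_rep eqxx andbT.
  by apply/negbTE/andP => -[_ /eqP xE]; move: czx; rewrite xE cK eqxx.
by case: (_ && _); rewrite ?mulr1 ?mulr0.
Qed.

Variables (B : 'M[R]_k) (a : 'I_k -> R).
Local Notation M := (blowup_mx c B a).
Local Notation N := (class_quotient_mx c B a).
Local Notation C := ((1%:M - gather_mx) *m M *m (1%:M + gather_mx)).

Lemma blowup_class_sum y j : \sum_(z | c z == j) M y z = N (c y) j.
Proof.
under eq_bigr => z /eqP cz do rewrite mxE cz.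
rewrite sumrB sumr_const mxE mulr_natl.
have -> : \sum_(z | c z == j) (y == z)%:R * a (c y) = (c y == j)%:R * a (c y).
  have [cyj|cyj] := eqVneq (c y) j.
    rewrite (bigD1 y) ?cyj //= eqxx big1 ?addr0 // => z /andP[_ zy].
    by rewrite eq_sym (negPf zy) mul0r.
  rewrite big1 ?mul0r // => z /eqP cz.
  have /negPf-> : y != z by apply: contraNneq cyj => ->; rewrite cz.
  by rewrite mul0r.
by rewrite /class_size; congr (_ *+ _ - _); apply: eq_card => z; rewrite inE.
Qed.

Lemma conj_blowup_rep y i : C y (r i) = (y \notin nonrep)%:R * N (c y) i.
Proof.
rewrite -mulmxA mul1Bgather_mxE !mulmx1Dgather_mxE (negPf (rep_nonrep i)).
rewrite !blowup_class_sum !cK.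
by case: (y \in nonrep); rewrite /= ?mul1r ?mul0r ?subrr ?subr0.
Qed.

Lemma conj_blowup_nonrep y x : y \in nonrep -> x \in nonrep ->
  C y x = - ((y == x)%:R * a (c y)).
Proof.
move=> y_nonrep x_nonrep.
rewrite -mulmxA mul1Bgather_mxE !mulmx1Dgather_mxE x_nonrep y_nonrep !mxE cK.
rewrite [r _ == x]eq_sym (negPf (nonrep_neq_rep _ x_nonrep)) /=.
by rewrite mul0r subr0 mul1r addrAC subrr sub0r.
Qed.

Lemma mxsub_conj_blowup :
  mxsub rep_first rep_first C =
  block_mx N (mxsub r enum_val C) 0 (diag_mx (\row_j - a (c (enum_val j)))).
Proof.
apply/matrixP => i j; rewrite mxE -[i]splitK -[j]splitK.
case: (split i) => i'; case: (split j) => j' /=;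
  rewrite ?rep_first_lshift ?rep_first_rshift.
- by rewrite block_mxEul conj_blowup_rep rep_nonrep cK mul1r.
- by rewrite block_mxEur [RHS]mxE.
- by rewrite block_mxEdl conj_blowup_rep (enum_valP i') mul0r [RHS]mxE.
rewrite block_mxEdr conj_blowup_nonrep ?enum_valP // !mxE (inj_eq enum_val_inj).
by case: eqP => [->|_]; rewrite ?mul1r ?mul0r ?oppr0.
Qed.

Lemma char_poly_blowup :
  char_poly M =
  char_poly N * \prod_(i < k) ('X + (a i)%:P) ^+ (class_size c i).-1.
Proof.
rewrite -(char_poly_conj M gather_mxK).
rewrite -(char_poly_mxsub_inj _ card_nonrep rep_first_inj) mxsub_conj_blowup.
rewrite char_poly_ublock char_poly_diag -prod_nonrep_class; congr (_ * _).
by apply: eq_bigr => j _; rewrite mxE polyCN opprK.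
Qed.

End Blowup.

Definition class_deg (m k : nat) (e : rel 'I_m) (c : 'I_m -> 'I_k)
    (i : 'I_k) : nat :=
  (class_size c i).-1 + #|[set z | (i != c z) && class_adj e c i (c z)]|.

Definition class_sombor_mx (F : rcfType) (m k : nat) (e : rel 'I_m)
    (c : 'I_m -> 'I_k) (d : 'I_k -> nat) : 'M[F]_k :=
  \matrix_(i, j) (if (i == j) || class_adj e c i j
                  then Num.sqrt ((d i)%:R ^+ 2 + (d j)%:R ^+ 2) else 0).

Lemma sqrtrDsqr_self (F : rcfType) (x : F) :
  0 <= x -> Num.sqrt (x ^+ 2 + x ^+ 2) = x * Num.sqrt 2.
Proof.
move=> x_ge0; rewrite (_ : _ + _ = x ^+ 2 * 2); last by ring.
by rewrite sqrtrM ?sqr_ge0 // sqrtr_sqr ger0_norm.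
Qed.

Section SuperGraph.
Variables (m k : nat) (e Rl : rel 'I_m) (c : 'I_m -> 'I_k).
Hypothesis RlE : forall x y, Rl x y = (c x == c y).

Lemma super_adjE y z :
  super_adj e Rl y z =
  ((c y == c z) && (y != z)) || ((c y != c z) && class_adj e c (c y) (c z)).
Proof.
rewrite /super_adj RlE; have [cyz|cyz] /= := eqVneq (c y) (c z).
  by rewrite andbT orbF.
have -> : y != z by apply: contraNneq cyz => ->.
apply: eq_existsb => x'; apply: eq_existsb => y'.
by rewrite !RlE (eq_sym (c y)) (eq_sym (c z)).
Qed.

Lemma deg_super_adj y : deg (super_adj e Rl) y = class_deg e c (c y).
Proof.
rewrite /deg; have -> : [set z | super_adj e Rl y z] =
    ([set z | c z == c y] :\ y) :|:
    [set z | (c y != c z) && class_adj e c (c y) (c z)].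
  by apply/setP => z; rewrite !inE super_adjE (eq_sym (c z)) (eq_sym z) andbC.
rewrite cardsU (_ : _ :&: _ = set0) ?cards0 ?subn0; last first.
  apply/setP => z; rewrite !inE.
  by have [->|] := eqVneq (c z) (c y); rewrite ?eqxx /= ?andbF.
rewrite /class_deg /class_size [#|[set z | c z == c y]|](cardsD1 y).
by rewrite inE eqxx.
Qed.

Lemma sombor_super_blowup (F : rcfType) :
  sombor_matrix F (super_adj e Rl) =
  blowup_mx c (class_sombor_mx F e c (class_deg e c))
    (fun i => (class_deg e c i)%:R * Num.sqrt 2).
Proof.
apply/matrixP => y z; rewrite !mxE super_adjE !deg_super_adj.
have [cyz|cyz] /= := eqVneq (c y) (c z).
  rewrite cyz sqrtrDsqr_self ?ler0n //.
  by case: (y == z); rewrite /= ?mul1r ?subrr ?mul0r ?subr0.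
have /negPf-> /= : y != z by apply: contraNneq cyz => ->.
by rewrite mul0r subr0.
Qed.

End SuperGraph.

Lemma N_matrix_class_quotient (F : rcfType) (m k : nat) (e : rel 'I_m)
    (c : 'I_m -> 'I_k) (d : 'I_k -> nat) :
  (forall i, 0 < class_size c i)%N ->
  N_matrix F e c d =
  class_quotient_mx c (class_sombor_mx F e c d)
    (fun i => (d i)%:R * Num.sqrt 2).
Proof.
move=> class_size_gt0; apply/matrixP => i j; rewrite !mxE.
have [<-|ij] /= := eqVneq i j.
  rewrite sqrtrDsqr_self ?ler0n //.
  by rewrite -[in RHS](prednK (class_size_gt0 i)) -natr1; ring.
by case: ifP; rewrite ?mulr0 mul0r subr0.
Qed.

Theorem theorem3p4 (F : rcfType) (m k : nat) (e : rel 'I_m) (Rl : rel 'I_m)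
    (c : 'I_m -> 'I_k) :
  simple_graph e -> connected_graph e ->
  equivalence_rel Rl ->
  (forall x y, Rl x y = (c x == c y)) ->
  (forall i : 'I_k, exists x, c x = i) ->
  exists d : 'I_k -> nat,
    (forall x : 'I_m, deg (super_adj e Rl) x = d (c x)) /\
    char_poly (sombor_matrix F (super_adj e Rl)) =
      char_poly (N_matrix F e c d) *
      \prod_(i < k) ('X + ((d i)%:R * Num.sqrt 2)%:P) ^+ (class_size c i).-1.
Proof.
move=> _ _ _ RlE c_surj.
have [r cK] : exists r : 'I_k -> 'I_m, cancel r c := fin_all_exists c_surj.
have class_size_gt0 i : (0 < class_size c i)%N.
  by apply/card_gt0P; exists (r i); rewrite inE cK.
exists (class_deg e c); split; first exact: deg_super_adj.
rewrite (sombor_super_blowup e RlE) N_matrix_class_quotient //.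
exact: char_poly_blowup.
Qed.
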